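(* Let $\ell$ be a prime and let $G$ be a subgroup of $\mathrm{GSp}_4(\mathbb{F}_\ell)$ maximal among Hasse subgroups of $\mathrm{GSp}_4(\mathbb{F}_\ell)$, such that $G\cap\mathrm{Sp}_4(\mathbb{F}_\ell)$ acts reducibly on $\mathbb{F}_\ell^4$. Then $\lambda(G)=\mathbb{F}_\ell^\times$.
   Context: Fix a non-degenerate alternating form on $\mathbb{F}_\ell^4$ with matrix $J$. $\mathrm{GSp}_4(\mathbb{F}_\ell)=\{M\in\mathrm{GL}_4(\mathbb{F}_\ell): M^TJM=kJ\text{ for some }k\in\mathbb{F}_\ell^\times\}$, with multiplier $\lambda(M)=k$, and $\mathrm{Sp}_4(\mathbb{F}_\ell)=\ker\lambda$. A subgroup of $\mathrm{GL}_n(\mathbb{F}_\ell)$ is Hasse if it acts irreducibly on $\mathbb{F}_\ell^n$ and each of its elements has an eigenvalue in $\mathbb{F}_\ell$. *)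

From HB Require Import structures.
From mathcomp Require Import all_boot all_order all_algebra all_fingroup.
Set Implicit Arguments. Unset Strict Implicit. Unset Printing Implicit Defensive.
Import GRing.Theory.
Local Open Scope ring_scope.

Section GSp4.
Variable F : finFieldType.

(* J is the matrix of a non-degenerate alternating form (x,y) |-> x^T J y on F^4 *)
Definition nondeg_alternating (J : 'M[F]_4) : Prop :=
  [/\ J^T = - J, (forall i, J i i = 0) & \det J != 0].

Definition GSp4 (J : 'M[F]_4) : {set {'GL_4[F]}} :=
  [set M : {'GL_4[F]} | [exists k : F, (k != 0) && ((GLval M)^T *m J *m GLval M == k *: J)]].

(* the multiplier lambda(M): the k with M^T J M = k J (0 if M is not in GSp) *)
Definition mult (J : 'M[F]_4) (M : 'M[F]_4) : F :=
  odflt 0 [pick k : F | (k != 0) && (M^T *m J *m M == k *: J)].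

Definition Sp4 (J : 'M[F]_4) : {set {'GL_4[F]}} :=
  [set M in GSp4 J | mult J (GLval M) == 1].

(* H acts irreducibly on F^4 (column vectors, v |-> M v): the only H-stable
   subspaces are 0 and F^4.  A subspace W is encoded as the row space of U
   (rows = transposed vectors of W); M W <= W  iff  U M^T <= U. *)
Definition irreducible_on_F4 (H : {set {'GL_4[F]}}) : Prop :=
  forall U : 'M[F]_4,
    (forall h, h \in H -> (U *m (GLval h)^T <= U)%MS) ->
    (U == 0) || row_full U.

Definition Hasse (H : {set {'GL_4[F]}}) : Prop :=
  irreducible_on_F4 H /\ (forall h, h \in H -> exists a : F, eigenvalue (GLval h) a).

Definition maximal_Hasse_in_GSp4 (J : 'M[F]_4) (G : {group {'GL_4[F]}}) : Prop :=
  [/\ G \subset GSp4 J, Hasse G &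
      forall H : {group {'GL_4[F]}}, H \subset GSp4 J -> Hasse H -> G \subset H -> H = G].

End GSp4.

From HB Require Import structures.
From mathcomp Require Import all_boot all_order all_algebra all_fingroup.
Import GRing.Theory.
Local Open Scope ring_scope.

(* Maximality forces G to contain the nonzero scalars z, whose multipliers
   are the squares z^2: adjoining central scalars keeps a Hasse subgroup of
   GSp_4 Hasse (eigenvalues get multiplied by z).  If every multiplier of G
   were a square k = z^2, then each g in G would be a scalar multiple of
   g z^-1 in G :&: Sp_4, so G and G :&: Sp_4 would stabilise the same
   subspaces and G :&: Sp_4 would be irreducible.  Hence some multiplier k0
   is a non-square, and the squares and their coset k0 * squares together
   fill F^x, because the squares have index at most 2 in F^x. *)

Set Implicit Arguments. Unset Strict Implicit. Unset Printing Implicit Defensive.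

Lemma card_unit_le_twice_squares (F : finFieldType) :
  (#|[set k : F | k != 0%R]| <= 2 * #|[set (z ^+ 2)%R | z in [set z : F | z != 0%R]]|)%N.
Proof.
set Nz := [set k : F | k != 0]; set Sq := [set z ^+ 2 | z in Nz].
pose sqrt (y : F) := odflt 0 [pick t | t ^+ 2 == y].
pose Roots := sqrt @: Sq.
have Nz_sub : Nz \subset Roots :|: [set - t | t in Roots].
  apply/subsetP => x xNz; have xSq : x ^+ 2 \in Sq by apply/imsetP; exists x.
  have : sqrt (x ^+ 2) ^+ 2 = x ^+ 2.
    by rewrite /sqrt; case: pickP => [t /eqP //|/(_ x)]; rewrite eqxx.
  move/eqP; rewrite -subr_eq0 subr_sqr mulf_eq0 subr_eq0 addr_eq0.
  case/orP=> /eqP Ex; rewrite inE; apply/orP; [left | right].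
    by apply/imsetP; exists (x ^+ 2); rewrite // Ex.
  by apply/imsetP; exists (sqrt (x ^+ 2)); rewrite ?imset_f // Ex opprK.
apply: leq_trans (subset_leq_card Nz_sub) _.
rewrite cardsU mul2n -addnn; apply: leq_trans (leq_subr _ _) _.
apply: leq_add; first exact: leq_imset_card.
exact: leq_trans (leq_imset_card _ _) (leq_imset_card _ _).
Qed.

Section ScalarGL.
Variable F : finFieldType.

Definition scalar_GL (z : F) : {'GL_4[F]} := insubd (1%g : {'GL_4[F]}) (z%:M : 'M[F]_4).

Lemma scalar_GLE z : z != 0 -> GLval (scalar_GL z) = z%:M.
Proof.
by move=> z0; rewrite insubdK // unfold_in /= unitmxE det_scalar unitfE expf_neq0.
Qed.

Lemma scalar_GL1 : scalar_GL 1 = 1%g.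
Proof. by apply: val_inj; rewrite /= scalar_GLE ?oner_neq0. Qed.

Lemma scalar_GLM a b : a != 0 -> b != 0 -> (scalar_GL a * scalar_GL b)%g = scalar_GL (a * b).
Proof.
move=> a0 b0; apply: val_inj; rewrite [val _]GL_MxE /=.
by rewrite !scalar_GLE ?mulf_neq0 // scalar_mxM.
Qed.

Lemma scalar_GL_central z (x : {'GL_4[F]}) : z != 0 -> commute (scalar_GL z) x.
Proof.
move=> z0; apply: val_inj; change (GLval (scalar_GL z * x) = GLval (x * scalar_GL z)).
by rewrite !GL_MxE scalar_GLE // scalar_mxC.
Qed.

Definition scalars_GL : {set {'GL_4[F]}} := [set scalar_GL z | z in [set z : F | z != 0]].

Lemma scalars_GL_group_set : group_set scalars_GL.
Proof.
apply/group_setP; split; first by apply/imsetP; exists 1; rewrite ?inE ?oner_neq0 ?scalar_GL1.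
move=> x y /imsetP[a]; rewrite inE => a0 -> /imsetP[b]; rewrite inE => b0 ->.
by rewrite scalar_GLM //; apply/imsetP; exists (a * b); rewrite // inE mulf_neq0.
Qed.

Canonical scalars_GL_group := Group scalars_GL_group_set.

Lemma mem_join_scalars_GL (G : {group {'GL_4[F]}}) h :
  h \in (G <*> scalars_GL_group)%G ->
  exists2 g, g \in G & exists2 z, z != 0 & h = (g * scalar_GL z)%g.
Proof.
have cGZ : scalars_GL_group \subset 'C(G)%g.
  by apply/centsP => y /imsetP[z]; rewrite inE => z0 -> x _; exact: scalar_GL_central.
rewrite /= cent_joinEr // => /mulsgP[g y gG /imsetP[z]]; rewrite inE => z0 -> ->.
by exists g => //; exists z.
Qed.

Lemma Hasse_join_scalars_GL (G : {group {'GL_4[F]}}) :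
  Hasse G -> Hasse (G <*> scalars_GL_group)%G.
Proof.
case=> Girr Geig; split=> [U stab | h].
  by apply: Girr => g gG; apply: stab; rewrite mem_gen // inE gG.
case/mem_join_scalars_GL=> g gG [z z0 ->].
have [b /eigenvalueP[v Ev v0]] := Geig g gG.
exists (b * z); apply/eigenvalueP; exists v => //.
by rewrite GL_MxE scalar_GLE // mulmxA Ev -scalemxAl mul_mx_scalar scalerA mulrC.
Qed.

End ScalarGL.

Lemma form_mulmx_scalar (R : comNzRingType) n (J M : 'M[R]_n) z :
  (M *m z%:M)^T *m J *m (M *m z%:M) = z ^+ 2 *: (M^T *m J *m M).
Proof.
rewrite trmx_mul tr_scalar_mx mul_scalar_mx mul_mx_scalar.
by rewrite -!scalemxAl -scalemxAr scalerA expr2.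
Qed.

Lemma nondeg_alternating_neq0 (F : finFieldType) (J : 'M[F]_4) :
  nondeg_alternating J -> J != 0.
Proof. by case=> _ _; apply: contraNneq => ->; rewrite det0. Qed.

Section Multiplier.
Variables (F : finFieldType) (J : 'M[F]_4).
Implicit Type u : {'GL_4[F]}.
Hypothesis J_neq0 : J != 0.

Lemma multE M k : k != 0 -> M^T *m J *m M = k *: J -> mult J M = k.
Proof.
move=> k0 E; rewrite /mult; case: pickP => [k' /andP[_ /eqP]|/(_ k)]; last first.
  by rewrite k0 E eqxx.
rewrite E => /eqP; rewrite -subr_eq0 -scalerBl scalemx_eq0 (negbTE J_neq0) orbF.
by rewrite subr_eq0 eq_sym => /eqP.
Qed.

Lemma mult1 : mult J 1 = 1.
Proof. by apply: multE; rewrite ?oner_neq0 // trmx1 mul1mx mulmx1 scale1r. Qed.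

Lemma GSp4_multE u : u \in GSp4 J -> (GLval u)^T *m J *m GLval u = mult J (GLval u) *: J.
Proof. by rewrite inE => /existsP[k /andP[k0 /eqP E]]; rewrite (multE k0 E). Qed.

Lemma GSp4_mult_neq0 u : u \in GSp4 J -> mult J (GLval u) != 0.
Proof. by rewrite inE => /existsP[k /andP[k0 /eqP E]]; rewrite (multE k0 E). Qed.

Lemma mem_GSp4 u k : k != 0 -> (GLval u)^T *m J *m GLval u = k *: J -> u \in GSp4 J.
Proof. by move=> k0 E; rewrite inE; apply/existsP; exists k; rewrite k0 E eqxx. Qed.

Lemma form_mulg_scalar_GL u z : u \in GSp4 J -> z != 0 ->
  (GLval (u * scalar_GL z)%g)^T *m J *m GLval (u * scalar_GL z)%g =
    (z ^+ 2 * mult J (GLval u)) *: J.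
Proof.
by move=> /GSp4_multE Eu z0; rewrite GL_MxE scalar_GLE // form_mulmx_scalar Eu scalerA.
Qed.

Lemma mult_mulg_scalar_GL u z : u \in GSp4 J -> z != 0 ->
  mult J (GLval (u * scalar_GL z)%g) = z ^+ 2 * mult J (GLval u).
Proof.
move=> uS z0; have m0 := GSp4_mult_neq0 uS.
by apply: multE; [rewrite mulf_neq0 ?expf_neq0 | exact: form_mulg_scalar_GL].
Qed.

Lemma mulg_scalar_GL_GSp4 u z : u \in GSp4 J -> z != 0 -> (u * scalar_GL z)%g \in GSp4 J.
Proof.
move=> uS z0; have m0 := GSp4_mult_neq0 uS.
by apply: mem_GSp4 (form_mulg_scalar_GL uS z0); rewrite mulf_neq0 ?expf_neq0.
Qed.

Lemma join_scalars_GL_GSp4 (G : {group {'GL_4[F]}}) :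
  G \subset GSp4 J -> (G <*> scalars_GL_group F)%G \subset GSp4 J.
Proof.
move=> GS; apply/subsetP => _ /mem_join_scalars_GL[g gG [z z0 ->]].
exact: mulg_scalar_GL_GSp4 (subsetP GS g gG) z0.
Qed.

Lemma maximal_Hasse_scalars_GL (G : {group {'GL_4[F]}}) z :
  maximal_Hasse_in_GSp4 J G -> z != 0 -> scalar_GL z \in G.
Proof.
case=> GS HG Gmax z0.
rewrite -(Gmax _ (join_scalars_GL_GSp4 GS) (Hasse_join_scalars_GL HG)) ?joing_subl //.
by rewrite mem_gen // inE imset_f ?orbT // inE.
Qed.

Variable G : {group {'GL_4[F]}}.
Hypotheses (G_GSp4 : G \subset GSp4 J)
  (scalars_GL_in : forall z, z != 0 -> scalar_GL z \in G).

Lemma irreducible_Sp4_of_square_multipliers :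
  irreducible_on_F4 G -> (forall g, g \in G -> exists z, mult J (GLval g) = z ^+ 2) ->
  irreducible_on_F4 (G :&: Sp4 J).
Proof.
move=> Girr sqG U stab; apply: Girr => g gG; have gS := subsetP G_GSp4 g gG.
have [z Ez] := sqG g gG; have z0 : z != 0.
  by apply: contraNneq (GSp4_mult_neq0 gS) => z0; rewrite Ez z0 expr0n.
have zV0 : z^-1 != 0 by rewrite invr_eq0.
have gzV_Sp4 : (g * scalar_GL z^-1%R)%g \in G :&: Sp4 J.
  rewrite inE groupM ?scalars_GL_in //= /Sp4 inE mulg_scalar_GL_GSp4 //=.
  by rewrite mult_mulg_scalar_GL // Ez -exprMn mulVf // expr1n.
have := stab _ gzV_Sp4.
rewrite GL_MxE scalar_GLE // trmx_mul tr_scalar_mx mul_scalar_mx -scalemxAr.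
by move/(scalemx_sub z); rewrite scalerA mulfV // scale1r.
Qed.

Lemma multipliers_coset_squares g z : g \in G -> z != 0 ->
  z ^+ 2 * mult J (GLval g) \in [set mult J (GLval h) | h : {'GL_4[F]} in G].
Proof.
move=> gG z0; rewrite -mult_mulg_scalar_GL ?(subsetP G_GSp4) //.
by apply: imset_f; rewrite groupM ?scalars_GL_in.
Qed.

Lemma multipliers_of_nonsquare g0 :
  g0 \in G -> (forall z, mult J (GLval g0) != z ^+ 2) ->
  [set mult J (GLval g) | g : {'GL_4[F]} in G] = [set k : F | k != 0].
Proof.
move=> g0G nsq; set k0 := mult J (GLval g0) in nsq.
set S := [set _ | _ in G]; set Nz := [set k : F | k != 0]; set Sq := [set z ^+ 2 | z in Nz].
pose k0Sq := [set x * k0 | x in Sq].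
have S_Nz : S \subset Nz.
  apply/subsetP => k /imsetP[g gG ->].
  by rewrite inE (GSp4_mult_neq0 (subsetP G_GSp4 g gG)).
have Sq_S : Sq \subset S.
  apply/subsetP => k /imsetP[z]; rewrite inE => z0 ->.
  by have := multipliers_coset_squares (group1 G) z0; rewrite GL_1E mult1 mulr1.
have k0Sq_S : k0Sq \subset S.
  apply/subsetP => k /imsetP[y /imsetP[z]]; rewrite inE => z0 -> ->.
  exact: multipliers_coset_squares.
have Sq_k0Sq_disjoint : Sq :&: k0Sq = set0.
  apply/setP => y; rewrite !inE; apply/andP => -[/imsetP[z _ ->] /imsetP[x /imsetP[w]]].
  rewrite inE => w0 -> E; case/eqP: (nsq (z / w)).
  by rewrite expr_div_n E mulrAC mulfV ?mul1r ?expf_neq0.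
have card_k0Sq : #|k0Sq| = #|Sq|.
  by apply: card_imset; apply: mulIf; rewrite (GSp4_mult_neq0 (subsetP G_GSp4 g0 g0G)).
apply/eqP; rewrite eqEcard S_Nz; apply: leq_trans (card_unit_le_twice_squares F) _.
apply: leq_trans (subset_leq_card (_ : Sq :|: k0Sq \subset S)); last by rewrite subUset Sq_S.
by rewrite cardsU Sq_k0Sq_disjoint cards0 subn0 card_k0Sq mul2n addnn.
Qed.

End Multiplier.

Theorem lemma4p5 (l : nat) (Hl : prime l) (J : 'M['F_l]_4)
  (HJ : nondeg_alternating J) (G : {group {'GL_4['F_l]}}) :
  maximal_Hasse_in_GSp4 J G ->
  ~ irreducible_on_F4 (G :&: Sp4 J) ->
  [set mult J (GLval g) | g : {'GL_4['F_l]} in G] = [set k : 'F_l | k != 0].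
Proof.
move=> maxG reducible; have J0 := nondeg_alternating_neq0 HJ.
have scalars_in z := @maximal_Hasse_scalars_GL _ _ J0 _ z maxG.
case: maxG => G_GSp4 [Girr _] _.
have [/exists_inP[g0 g0G /forallP nonsquare] | /exists_inPn all_squares] :=
  boolP [exists g0 in G, [forall z, mult J (GLval g0) != z ^+ 2]].
  exact (multipliers_of_nonsquare J0 G_GSp4 scalars_in g0G nonsquare).
case: reducible.
apply: (irreducible_Sp4_of_square_multipliers J0 G_GSp4 scalars_in Girr) => g gG.
by have /forallPn[z /negPn/eqP] := all_squares g gG; exists z.
Qed.
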